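(* Let $N$ be finite, $\mathbf{P}$ stochastic on $N$, $0<\beta<1$, $\mathbf{R}\in\mathbb{R}^N$, $S\subseteq N$ and $\nu\in\mathbb R$. For every stopping rule $\tau$ and every $i\in N$: (a) $g_i^\tau=g_i^S-\sum_{j\in S}w_j^Sx_{ij}^{0,\tau}+\sum_{j\in S^c}w_j^Sx_{ij}^{1,\tau}$; (b) $f_i^\tau=f_i^S-\sum_{j\in S}r_j^Sx_{ij}^{0,\tau}+\sum_{j\in S^c}r_j^Sx_{ij}^{1,\tau}$; (c) $f_i^\tau-\nu g_i^\tau=f_i^S-\nu g_i^S-\sum_{j\in S}(r_j^S-\nu w_j^S)x_{ij}^{0,\tau}+\sum_{j\in S^c}(r_j^S-\nu w_j^S)x_{ij}^{1,\tau}$.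
   Context: $N$ is a finite state set, $\mathbf{P}=(p_{ij})$ stochastic, $\beta\in(0,1)$, $\mathbf{R}=(R_j)$; $X(t)$ is the Markov chain with matrix $\mathbf{P}$, $\mathsf{E}_i$ is expectation given $X(0)=i$, $S^c=N\setminus S$. A stopping rule is a (possibly randomized) stopping time $\tau\in\{0,1,\dots\}\cup\{\infty\}$ for the chain's history. Define $f_i^\tau=\mathsf{E}_i[\sum_{t=0}^{\tau-1}R_{X(t)}\beta^t]$, $g_i^\tau=\mathsf{E}_i[\sum_{t=0}^{\tau-1}\beta^t]$, and occupancy measures $x_{ij}^{1,\tau}=\mathsf{E}_i[\sum_{t=0}^{\tau-1}1_{\{X(t)=j\}}\beta^t]$ and $x_{ij}^{0,\tau}=\mathsf{E}_i[1_{\{\tau<\infty,X(\tau)=j\}}\beta^\tau]/(1-\beta)$ (the discounted time spent passive at $j$ when, after stopping, the chain remains frozen at $X(\tau)$ forever). For $S\subseteq N$ let $\tau_S=\min\{t\ge0:X(t)\notin S\}$, $f_i^S=f_i^{\tau_S}$, $g_i^S=g_i^{\tau_S}$, and $$w_i^S=1+\beta\sum_{j}p_{ij}g_j^S-\beta g_i^S,\qquad r_i^S=R_i+\beta\sum_jp_{ij}f_j^S-\beta f_i^S.$$ *)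

From HB Require Import structures.
From mathcomp Require Import all_boot all_order all_algebra.
From mathcomp Require Import all_classical all_reals all_analysis.
Set Implicit Arguments. Unset Strict Implicit. Unset Printing Implicit Defensive.
Import Order.TTheory GRing.Theory Num.Theory.
Local Open Scope ring_scope.

Section MarkovStopping.
Variables (R : realType) (N : finType).

Definition tsum (u : nat -> R) : R := limn (fun n => \sum_(0 <= t < n) u t).

Definition stochastic (P : N -> N -> R) : Prop :=
  (forall i j, 0 <= P i j) /\ (forall i, \sum_(j : N) P i j = 1).

Fixpoint chainp (P : N -> N -> R) (x : N) (r : seq N) : R :=
  match r with [::] => 1 | y :: r' => P x y * chainp P y r' end.

(* P_i(X(0..t) = h) for a history h = [:: X(0); ...; X(t)] *)
Definition pathp (P : N -> N -> R) (i : N) (h : seq N) : R :=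
  match h with [::] => 0 | x :: r => (x == i)%:R * chainp P x r end.

(* A (possibly randomized) stopping rule is described by its stopping
   hazard: sigma h = P(tau = t | X(0..t) = h, tau >= t), for h a history
   of length t+1.  Valid iff values lie in [0,1]. *)
Definition stopping_rule (sigma : seq N -> R) : Prop :=
  forall h, 0 <= sigma h <= 1.

(* P(tau > t | X(0..t) = h), t = size h - 1 *)
Definition cont (sigma : seq N -> R) (h : seq N) : R :=
  \prod_(s < size h) (1 - sigma (take s.+1 h)).

(* P(tau = t | X(0..t) = h), t = size h - 1 *)
Definition stopw (sigma : seq N -> R) (h : seq N) : R :=
  (\prod_(s < (size h).-1) (1 - sigma (take s.+1 h))) * sigma h.

Definition lastst t (h : (t.+1).-tuple N) : N := tnth h ord_max.

Variables (P : N -> N -> R) (beta : R) (Rw : N -> R).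

(* f_i^tau = E_i[sum_{t<tau} R_{X(t)} beta^t] *)
Definition fval (sigma : seq N -> R) (i : N) : R :=
  tsum (fun t => beta ^+ t *
    \sum_(h : (t.+1).-tuple N) pathp P i h * cont sigma h * Rw (lastst h)).

(* g_i^tau = E_i[sum_{t<tau} beta^t] *)
Definition gval (sigma : seq N -> R) (i : N) : R :=
  tsum (fun t => beta ^+ t *
    \sum_(h : (t.+1).-tuple N) pathp P i h * cont sigma h).

(* x_{ij}^{1,tau} = E_i[sum_{t<tau} 1{X(t)=j} beta^t] *)
Definition x1 (sigma : seq N -> R) (i j : N) : R :=
  tsum (fun t => beta ^+ t *
    \sum_(h : (t.+1).-tuple N) pathp P i h * cont sigma h * (lastst h == j)%:R).

(* x_{ij}^{0,tau} = E_i[1{tau<oo, X(tau)=j} beta^tau] / (1 - beta) *)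
Definition x0 (sigma : seq N -> R) (i j : N) : R :=
  tsum (fun t => beta ^+ t *
    \sum_(h : (t.+1).-tuple N) pathp P i h * stopw sigma h * (lastst h == j)%:R)
  / (1 - beta).

(* tau_S = min{t >= 0 : X(t) \notin S}: stop exactly when current state leaves S *)
Definition sigmaS (S : {set N}) (h : seq N) : R :=
  match h with [::] => 0 | x :: r => (last x r \notin S)%:R end.

Definition fS (S : {set N}) (i : N) : R := fval (sigmaS S) i.
Definition gS (S : {set N}) (i : N) : R := gval (sigmaS S) i.

Definition wS (S : {set N}) (i : N) : R :=
  1 + beta * \sum_(j : N) P i j * gS S j - beta * gS S i.
Definition rS (S : {set N}) (i : N) : R :=
  Rw i + beta * \sum_(j : N) P i j * fS S j - beta * fS S i.

End MarkovStopping.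

From HB Require Import structures.
From mathcomp Require Import all_boot all_order all_algebra.
From mathcomp Require Import all_classical all_reals all_analysis.
From mathcomp Require Import ring.
Import Order.TTheory GRing.Theory Num.Theory.
Import numFieldNormedType.Exports.
Local Open Scope classical_set_scope.
Local Open Scope ring_scope.
Set Implicit Arguments. Unset Strict Implicit. Unset Printing Implicit Defensive.

(* The heart of the argument is a discounted Dynkin formula: for every
   stopping rule tau and every V : N -> R,
       V_i = sum_j (V_j - beta (P V)_j) x1_ij + sum_j (1 - beta) V_j x0_ij,
   i.e. V_i = E_i[sum_{t<tau} beta^t ((I - beta P) V)(X_t)] + E_i[beta^tau V(X_tau)].
   1. Expectations over histories of length n+1 satisfy a first-step
      recursion (the stopping hazard is shifted by the first state); by
      induction this gives the formula on a finite horizon n, with a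
      remainder beta^n E_i[1{tau >= n} V(X_n)].
   2. All the history expectations lie in [0,1], so the discounted series
      converge (compared with a geometric series) and the remainder vanishes.
   3. The value V of tau_S vanishes off S and satisfies V_j = W_j + beta (P V)_j
      on S; inserting it into the Dynkin formula and sorting the states into
      S and S^c yields (a) (W = 1) and (b) (W = R); (c) is (b) - nu (a). *)

Section HistoryExpectations.
Variables (R : realType) (N : finType) (P : N -> N -> R).

Lemma sum_tuple_cons n (F : seq N -> R) :
  \sum_(h : n.+1.-tuple N) F h = \sum_(x : N) \sum_(h : n.-tuple N) F (x :: h).
Proof.
rewrite pair_big /=.
rewrite (reindex (fun p : N * n.-tuple N => [tuple of p.1 :: p.2])) //=.
exists (fun t : n.+1.-tuple N => (thead t, [tuple of behead t])) => [[x t]|t] _ /=.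
  by congr (_, _); apply: val_inj.
by apply: val_inj => /=; rewrite [in RHS](tuple_eta t).
Qed.

Lemma sum_tuple0 (F : seq N -> R) : \sum_(h : 0.-tuple N) F h = F [::].
Proof.
rewrite (big_pred1 [tuple]) // => t; apply/esym/eqP; apply: val_inj.
by case: t => [[]].
Qed.

Lemma lastst_last t (h : (t.+1).-tuple N) d : lastst h = last d h.
Proof. by rewrite /lastst (tnth_nth d) /= -nth_last size_tuple. Qed.

(* Under P_i only histories starting at i count. *)
Lemma pathp_sum n i (F : seq N -> R) :
  \sum_(h : n.+1.-tuple N) pathp P i h * F h =
  \sum_(h : n.-tuple N) chainp P i h * F (i :: h).
Proof.
rewrite (@sum_tuple_cons _ (fun h => pathp P i h * F h)) (bigD1 i) //= [X in _ + X]big1 ?addr0.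
  by apply: eq_bigr => h _; rewrite eqxx mul1r.
by move=> x /negbTE xi; apply: big1 => h _; rewrite xi !mul0r.
Qed.

(* The stopping hazard seen from time 1 on, when the chain started at x. *)
Definition shift (s : seq N -> R) (x : N) : seq N -> R := fun h => s (x :: h).

(* P(tau >= t | X(0..t) = h): the rule has not stopped before time t. *)
Definition precont (s : seq N -> R) (h : seq N) : R :=
  \prod_(k < (size h).-1) (1 - s (take k.+1 h)).

Definition first_step (c : (seq N -> R) -> seq N -> R) : Prop :=
  forall s i x h, c s (i :: x :: h) = (1 - s [:: i]) * c (shift s i) (x :: h).

Lemma cont_first_step : first_step (@cont R N).
Proof.
move=> s i x h; rewrite /cont /= big_ord_recl /= ?take0.
by congr (_ * _); apply: eq_bigr => k _; rewrite /shift /bump leq0n add1n.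
Qed.

Lemma precont_first_step : first_step precont.
Proof.
move=> s i x h; rewrite /precont /= big_ord_recl /= ?take0.
by congr (_ * _); apply: eq_bigr => k _; rewrite /shift /bump leq0n add1n.
Qed.

Lemma stopw_first_step : first_step (@stopw R N).
Proof. by move=> s i x h; rewrite /stopw -/(precont _ _) precont_first_step mulrA. Qed.

Definition Ehist (c : (seq N -> R) -> seq N -> R) n (s : seq N -> R) i
    (W : N -> R) : R :=
  \sum_(h : n.+1.-tuple N) pathp P i h * (c s h * W (last i h)).

Lemma Ehist0 c s i W : Ehist c 0 s i W = c s [:: i] * W i.
Proof.
rewrite /Ehist (@pathp_sum 0 i (fun h => c s h * W (last i h))).
by rewrite (@sum_tuple0 (fun h => chainp P i h * (c s (i :: h) * W (last i (i :: h))))) /= mul1r.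
Qed.

Lemma EhistS c n s i W : first_step c ->
  Ehist c n.+1 s i W = (1 - s [:: i]) * \sum_k P i k * Ehist c n (shift s i) k W.
Proof.
move=> hc; rewrite /Ehist (@pathp_sum n.+1 i (fun h => c s h * W (last i h))).
rewrite (@sum_tuple_cons _ (fun h => chainp P i h * (c s (i :: h) * W (last i (i :: h))))).
rewrite mulr_sumr; apply: eq_bigr => k _.
rewrite (@pathp_sum n k (fun h => c (shift s i) h * W (last k h))) !mulr_sumr.
by apply: eq_bigr => h _ /=; rewrite hc; ring.
Qed.

Definition ind (j : N) : N -> R := fun x => (x == j)%:R.

Lemma sum_ind (W : N -> R) x : \sum_j W j * ind j x = W x.
Proof.
rewrite (bigD1 x) //= /ind eqxx mulr1 big1 ?addr0 // => j /negbTE.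
by rewrite eq_sym => ->; rewrite mulr0.
Qed.

Lemma Ehist_lin c n s i W : Ehist c n s i W = \sum_j W j * Ehist c n s i (ind j).
Proof.
rewrite /Ehist; under [RHS]eq_bigr do rewrite mulr_sumr.
rewrite exchange_big; apply: eq_bigr => h _.
rewrite -[W (last i h)]sum_ind !mulr_sumr; apply: eq_bigr => j _; ring.
Qed.

Local Notation Erun := (Ehist (@cont R N)).
Local Notation Estop := (Ehist (@stopw R N)).
Local Notation Ealive := (Ehist precont).

Lemma cont1 (s : seq N -> R) (i : N) : cont s [:: i] = 1 - s [:: i].
Proof. by rewrite /cont big_ord1. Qed.

Lemma stopw1 (s : seq N -> R) (i : N) : stopw s [:: i] = s [:: i].
Proof. by rewrite /stopw big_ord0 mul1r. Qed.

Lemma precont1 (s : seq N -> R) (i : N) : precont s [:: i] = 1.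
Proof. by rewrite /precont big_ord0. Qed.

Lemma ErunS n s i W :
  Erun n.+1 s i W = (1 - s [:: i]) * \sum_k P i k * Erun n (shift s i) k W.
Proof. exact/EhistS/cont_first_step. Qed.

Lemma EstopS n s i W :
  Estop n.+1 s i W = (1 - s [:: i]) * \sum_k P i k * Estop n (shift s i) k W.
Proof. exact/EhistS/stopw_first_step. Qed.

Lemma EaliveS n s i W :
  Ealive n.+1 s i W = (1 - s [:: i]) * \sum_k P i k * Ealive n (shift s i) k W.
Proof. exact/EhistS/precont_first_step. Qed.

Variable beta : R.

Definition disc_gen (V : N -> R) : N -> R := fun j => V j - beta * \sum_k P j k * V k.

Lemma dynkin_finite V n : forall s i, V i =
  \sum_(0 <= t < n) beta ^+ t * (Erun t s i (disc_gen V) + Estop t s i V)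
  + beta ^+ n * Ealive n s i V.
Proof.
elim: n => [|n IH] s i.
  by rewrite big_geq // add0r expr0 mul1r Ehist0 precont1 mul1r.
rewrite big_nat_recl //= expr0 mul1r !Ehist0 cont1 stopw1.
(* After the first step the remaining terms are the horizon-n formula for
   the shifted rule, averaged over the next state. *)
have later : \sum_(0 <= t < n) beta ^+ t.+1 * (Erun t.+1 s i (disc_gen V)
      + Estop t.+1 s i V) + beta ^+ n.+1 * Ealive n.+1 s i V
    = beta * (1 - s [:: i]) * \sum_k P i k * V k.
  transitivity (beta * (1 - s [:: i]) * \sum_k P i k *
     (\sum_(0 <= t < n) beta ^+ t * (Erun t (shift s i) k (disc_gen V)
        + Estop t (shift s i) k V) + beta ^+ n * Ealive n (shift s i) k V)); last first.
    by congr (_ * _); apply: eq_bigr => k _; rewrite -IH.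
  rewrite EaliveS; under eq_bigr do rewrite ErunS EstopS.
  rewrite !mulr_sumr.
  rewrite [RHS](eq_bigr (fun k => beta * (1 - s [:: i]) * P i k *
      (\sum_(0 <= t < n) beta ^+ t * (Erun t (shift s i) k (disc_gen V)
         + Estop t (shift s i) k V))
      + beta ^+ n.+1 * ((1 - s [:: i]) * (P i k * Ealive n (shift s i) k V)))); last first.
    by move=> k _; rewrite exprS; ring.
  rewrite big_split /=; congr (_ + _).
  under [RHS]eq_bigr do rewrite mulr_sumr.
  rewrite [RHS]exchange_big /=; apply: eq_bigr => t _.
  rewrite !mulr_sumr -big_split /= mulr_sumr; apply: eq_bigr => k _; rewrite exprS; ring.
rewrite -addrA later /disc_gen; ring.
Qed.

End HistoryExpectations.

Arguments ind {R N} j x.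

Section Convergence.
Variables (R : realType) (N : finType) (P : N -> N -> R) (beta : R).
Hypothesis stochP : stochastic P.
Hypothesis beta01 : 0 < beta < 1.

Local Notation Ehist := (Ehist P).
Local Notation Erun := (Ehist (@cont R N)).
Local Notation Estop := (Ehist (@stopw R N)).
Local Notation Ealive := (Ehist (@precont R N)).

Let unit_interval (x : R) := 0 <= x <= 1.

Lemma unit_intervalM a b : unit_interval a -> unit_interval b -> unit_interval (a * b).
Proof. by move=> /andP[a0 a1] /andP[b0 b1]; rewrite /unit_interval mulr_ge0 //= mulr_ile1. Qed.

Lemma unit_intervalC a : unit_interval a -> unit_interval (1 - a).
Proof. by move=> /andP[a0 a1]; rewrite /unit_interval subr_ge0 a1 /= lerBlDr lerDl. Qed.

Lemma unit_interval_avg i (X : N -> R) :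
  (forall k, unit_interval (X k)) -> unit_interval (\sum_k P i k * X k).
Proof.
case: stochP => P0 P1 hX; apply/andP; split.
  by apply: sumr_ge0 => k _; apply: mulr_ge0 => //; case/andP: (hX k).
rewrite -(P1 i); apply: ler_sum => k _; apply: ler_piMr => //; by case/andP: (hX k).
Qed.

(* Under a stopping rule, history expectations of [0,1]-valued rewards lie
   in [0,1]: they are expectations of products of probabilities. *)
Lemma Ehist_unit c
  (hc : first_step c)
  (h0 : forall s i, stopping_rule s -> unit_interval (c s [:: i])) n :
  forall s i W, stopping_rule s -> (forall x, unit_interval (W x)) ->
  unit_interval (Ehist c n s i W).
Proof.
elim: n => [|n IH] s i W hs hW.
  by rewrite Ehist0; apply: unit_intervalM; [apply: h0 | apply: hW].
rewrite EhistS //; apply: unit_intervalM; first exact: unit_intervalC (hs [:: i]).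
by apply: unit_interval_avg => k; apply: IH => // h; apply: hs.
Qed.

Lemma ind_unit (j x : N) : unit_interval (ind j x).
Proof. by rewrite /unit_interval /ind; case: (x == j); rewrite ?ler01 ?lexx. Qed.

Lemma Erun_unit n s i j : stopping_rule s -> unit_interval (Erun n s i (ind j)).
Proof.
move=> hs; apply: Ehist_unit => // [|s' i' hs'|x]; last exact: ind_unit.
- exact: cont_first_step.
- by rewrite cont1; apply: unit_intervalC (hs' _).
Qed.

Lemma Estop_unit n s i j : stopping_rule s -> unit_interval (Estop n s i (ind j)).
Proof.
move=> hs; apply: Ehist_unit => // [|s' i' hs'|x]; last exact: ind_unit.
- exact: stopw_first_step.
- by rewrite stopw1; apply: hs'.
Qed.

Lemma Ealive_unit n s i j : stopping_rule s -> unit_interval (Ealive n s i (ind j)).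
Proof.
move=> hs; apply: Ehist_unit => // [|s' i' _|x]; last exact: ind_unit.
- exact: precont_first_step.
- by rewrite precont1 /unit_interval ler01 lexx.
Qed.

Lemma beta_ge0 : 0 <= beta. Proof. by case/andP: beta01 => /ltW. Qed.

Lemma norm_beta_lt1 : `|beta| < 1.
Proof. by rewrite ger0_norm ?beta_ge0 //; case/andP: beta01. Qed.

(* A discounted series of [0,1]-valued terms is dominated by a geometric one. *)
Lemma cvg_disc_series (G : nat -> R) : (forall t, unit_interval (G t)) ->
  cvgn (series (fun t => beta ^+ t * G t)).
Proof.
move=> hG; have b0 := exprn_ge0 _ beta_ge0.
apply: (@series_le_cvg _ _ (geometric 1 beta)) => [t|t|t|].
- by apply: mulr_ge0 => //; case/andP: (hG t).
- by rewrite /geometric /= mul1r.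
- by rewrite /geometric /= mul1r; apply: ler_piMr => //; case/andP: (hG t).
- exact: is_cvg_geometric_series norm_beta_lt1.
Qed.

Definition dseries c s i W := series (fun t => beta ^+ t * Ehist c t s i W).
Definition occ c s i j := limn (dseries c s i (ind j)).

Lemma dseries_lin c s i W :
  dseries c s i W = (fun n => \sum_j W j * dseries c s i (ind j) n).
Proof.
apply/funext => n; rewrite /dseries /series /=.
under eq_bigr do rewrite Ehist_lin mulr_sumr.
rewrite exchange_big /=; apply: eq_bigr => j _; rewrite mulr_sumr.
by apply: eq_bigr => t _; ring.
Qed.

Lemma cvg_dseries c s i W : (forall t j, unit_interval (Ehist c t s i (ind j))) ->
  dseries c s i W @ \oo --> \sum_j W j * occ c s i j.
Proof.
move=> hG; rewrite dseries_lin.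
apply: (cvg_big add_continuous) => j _; apply: cvgMl_tmp.
exact: cvg_disc_series (hG ^~ j).
Qed.

Lemma remainder_cvg0 s i V : stopping_rule s ->
  (fun n => beta ^+ n * Ealive n s i V) @ \oo --> 0.
Proof.
move=> hs; set M := \sum_x `|V x|.
have bound n : `|Ealive n s i V| <= M.
  rewrite Ehist_lin; apply: le_trans (ler_norm_sum _ _ _) _.
  apply: ler_sum => j _; rewrite normrM; apply: ler_piMr => //.
  by have /andP[c0 c1] := Ealive_unit n i j hs; rewrite ger0_norm.
have geo0 : (fun n => M * beta ^+ n) @ \oo --> 0.
  by rewrite -(mulr0 M); apply: cvgMl_tmp; apply: cvg_expr norm_beta_lt1.
apply: (@squeeze_cvgr _ _ _ _ (fun n => - (M * beta ^+ n)) (fun n => M * beta ^+ n)).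
- apply: nearW => n /=; rewrite -ler_norml normrM ger0_norm ?exprn_ge0 ?beta_ge0 //.
  by rewrite mulrC ler_wpM2r ?exprn_ge0 ?beta_ge0.
- by rewrite -oppr0; apply: cvgN.
- exact: geo0.
Qed.

Lemma dynkin s i V : stopping_rule s ->
  V i = \sum_j disc_gen P beta V j * occ (@cont R N) s i j
        + \sum_j V j * occ (@stopw R N) s i j.
Proof.
move=> hs.
have lim_occ : (dseries (@cont R N) s i (disc_gen P beta V)
                 + dseries (@stopw R N) s i V) @ \oo -->
    (\sum_j disc_gen P beta V j * occ (@cont R N) s i j
     + \sum_j V j * occ (@stopw R N) s i j).
  apply: cvgD; apply: cvg_dseries => t j; [exact: Erun_unit | exact: Estop_unit].
have lim_V : (dseries (@cont R N) s i (disc_gen P beta V)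
               + dseries (@stopw R N) s i V) @ \oo --> V i.
  have -> : dseries (@cont R N) s i (disc_gen P beta V) + dseries (@stopw R N) s i V
            = (fun n => V i - beta ^+ n * Ealive n s i V).
    apply/funext => n; rewrite [in RHS](dynkin_finite P beta V n s i) addrK.
    by under [RHS]eq_bigr do rewrite mulrDr; rewrite big_split.
  by rewrite -[X in _ --> X]subr0; apply: cvgB; [exact: cvg_cst | exact: remainder_cvg0].
by rewrite -(cvg_lim (@Rhausdorff R) lim_V) (cvg_lim (@Rhausdorff R) lim_occ).
Qed.

Definition reward s (W : N -> R) i := limn (dseries (@cont R N) s i W).

Lemma rewardE s W i : stopping_rule s ->
  reward s W i = \sum_j W j * occ (@cont R N) s i j.
Proof.
move=> hs; rewrite /reward; apply: (cvg_lim (@Rhausdorff R)).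
by apply: cvg_dseries => t j; apply: Erun_unit.
Qed.

Lemma reward_cvg s W i : stopping_rule s ->
  dseries (@cont R N) s i W @ \oo --> reward s W i.
Proof. by move=> hs; rewrite rewardE //; apply: cvg_dseries => t j; apply: Erun_unit. Qed.

Lemma limn_eq (u v : nat -> R) : u =1 v -> limn u = limn v.
Proof. by move=> /funext ->. Qed.

Lemma x1E s i j : x1 P beta s i j = occ (@cont R N) s i j.
Proof.
apply: limn_eq => n; rewrite /series /=; apply: eq_bigr => t _; congr (_ * _).
by apply: eq_bigr => h _; rewrite (lastst_last h i) mulrA.
Qed.

Lemma x0E s i j : x0 P beta s i j = occ (@stopw R N) s i j / (1 - beta).
Proof.
congr (_ / _); apply: limn_eq => n; rewrite /series /=; apply: eq_bigr => t _; congr (_ * _).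
by apply: eq_bigr => h _; rewrite (lastst_last h i) mulrA.
Qed.

Lemma gvalE s i : gval P beta s i = reward s (fun _ => 1) i.
Proof.
apply: limn_eq => n; rewrite /series /=; apply: eq_bigr => t _; congr (_ * _).
by apply: eq_bigr => h _; rewrite mulr1.
Qed.

Lemma fvalE Rw s i : fval P beta Rw s i = reward s Rw i.
Proof.
apply: limn_eq => n; rewrite /series /=; apply: eq_bigr => t _; congr (_ * _).
by apply: eq_bigr => h _; rewrite (lastst_last h i) mulrA.
Qed.

Variable S : {set N}.
Local Notation tauS := (@sigmaS R N S).

Lemma sigmaS_rule : stopping_rule tauS.
Proof.
by move=> [|x r] /=; rewrite ?lexx ?ler01 //; case: (last x r \notin S); rewrite ?lexx ?ler01.
Qed.

Lemma shift_sigmaS j : j \in S -> shift tauS j = tauS.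
Proof. by move=> jS; apply/funext => -[|x r]; rewrite /shift /sigmaS /= ?jS. Qed.

(* Outside S the rule tau_S stops at once: nothing is collected. *)
Lemma reward_out W j : j \notin S -> reward tauS W j = 0.
Proof.
move=> jS; rewrite /reward (@limn_eq _ (fun _ => 0)); first exact: lim_cst.
move=> n; rewrite /series /=; apply: big1 => -[|t] _.
- by rewrite Ehist0 cont1 /= jS subrr !mul0r mulr0.
- by rewrite ErunS /= jS subrr !mul0r mulr0.
Qed.

Lemma reward_in W j : j \in S ->
  reward tauS W j = W j + beta * \sum_k P j k * reward tauS W k.
Proof.
move=> jS; rewrite /reward; apply: (cvg_lim (@Rhausdorff R)); rewrite -cvg_shiftS.
have -> : [sequence dseries (@cont R N) tauS j W n.+1]_n =
    (fun n => W j + beta * \sum_k P j k * dseries (@cont R N) tauS k W n).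
  apply/funext => n; rewrite /dseries /series /= big_nat_recl //= expr0 mul1r.
  rewrite Ehist0 cont1 /= jS subr0 mul1r; congr (_ + _).
  under eq_bigr do rewrite ErunS /= jS subr0 mul1r shift_sigmaS //.
  rewrite mulr_sumr; under [RHS]eq_bigr do rewrite mulr_sumr mulr_sumr.
  rewrite [RHS]exchange_big /=; apply: eq_bigr => t _; rewrite !mulr_sumr.
  by apply: eq_bigr => k _; rewrite exprS; ring.
apply: cvgD; first exact: cvg_cst.
apply: cvgMl_tmp; apply: (cvg_big add_continuous) => k _.
by apply: cvgMl_tmp; apply: reward_cvg sigmaS_rule.
Qed.

Lemma reward_decomposition s i (W V : N -> R) : stopping_rule s ->
  (forall j, j \notin S -> V j = 0) ->
  (forall j, j \in S -> V j = W j + beta * \sum_k P j k * V k) ->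
  let u j := W j + beta * \sum_k P j k * V k - beta * V j in
  reward s W i = V i - \sum_(j in S) u j * x0 P beta s i j
                     + \sum_(j in ~: S) u j * x1 P beta s i j.
Proof.
move=> hs Vout Vin u.
have b1 : 1 - beta != 0 by rewrite subr_eq0 eq_sym; case/andP: beta01 => _ /lt_eqF ->.
rewrite rewardE // [in RHS](dynkin i V hs) (big_mkcond (fun j => j \in S)).
rewrite (big_mkcond (fun j => j \in ~: S)) /= -big_split /= -sumrB -big_split /=.
apply: eq_bigr => j _; rewrite x0E x1E inE /u /disc_gen.
case: (boolP (j \in S)) => jS /=; last by rewrite (Vout j jS); ring.
by rewrite [V j](Vin j jS); field.
Qed.

End Convergence.

Lemma decomposition_combination (R : comRingType) (N : finType) (S : {set N})
    (nu a A b B : R) (u v y0 y1 : N -> R) :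
  a = A - \sum_(j in S) u j * y0 j + \sum_(j in ~: S) u j * y1 j ->
  b = B - \sum_(j in S) v j * y0 j + \sum_(j in ~: S) v j * y1 j ->
  b - nu * a = B - nu * A - \sum_(j in S) (v j - nu * u j) * y0 j
                          + \sum_(j in ~: S) (v j - nu * u j) * y1 j.
Proof.
have sum_sub (T : {set N}) (y : N -> R) : \sum_(j in T) (v j - nu * u j) * y j =
    \sum_(j in T) v j * y j - nu * \sum_(j in T) u j * y j.
  by rewrite mulr_sumr -sumrB; apply: eq_bigr => j _; ring.
by move=> -> ->; rewrite !sum_sub; ring.
Qed.

Theorem proposition3 (R : realType) (N : finType) (P : N -> N -> R) (beta : R)
    (Rw : N -> R) (S : {set N}) (nu : R) :
  stochastic P -> 0 < beta < 1 ->
  forall (sigma : seq N -> R), stopping_rule sigma -> forall i : N,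
  [/\ gval P beta sigma i =
        gS P beta S i - \sum_(j in S) wS P beta S j * x0 P beta sigma i j
        + \sum_(j in ~: S) wS P beta S j * x1 P beta sigma i j,
      fval P beta Rw sigma i =
        fS P beta Rw S i - \sum_(j in S) rS P beta Rw S j * x0 P beta sigma i j
        + \sum_(j in ~: S) rS P beta Rw S j * x1 P beta sigma i j
    & fval P beta Rw sigma i - nu * gval P beta sigma i =
        fS P beta Rw S i - nu * gS P beta S i
        - \sum_(j in S) (rS P beta Rw S j - nu * wS P beta S j) * x0 P beta sigma i j
        + \sum_(j in ~: S) (rS P beta Rw S j - nu * wS P beta S j) * x1 P beta sigma i j].
Proof.
move=> stochP beta01 sigma hs i.
have gSE j : gS P beta S j = reward P beta (@sigmaS R N S) (fun _ => 1) j.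
  exact: gvalE.
have fSE j : fS P beta Rw S j = reward P beta (@sigmaS R N S) Rw j.
  exact: fvalE.
have part_a : gval P beta sigma i = gS P beta S i
    - \sum_(j in S) wS P beta S j * x0 P beta sigma i j
    + \sum_(j in ~: S) wS P beta S j * x1 P beta sigma i j.
  rewrite gvalE; apply: (@reward_decomposition _ _ _ _ stochP beta01 S _ i _ (gS P beta S) hs) => j jS.
    by rewrite gSE reward_out.
  rewrite !gSE reward_in //; congr (_ + _ * _).
  by apply: eq_bigr => k _; rewrite gSE.
have part_b : fval P beta Rw sigma i = fS P beta Rw S i
    - \sum_(j in S) rS P beta Rw S j * x0 P beta sigma i j
    + \sum_(j in ~: S) rS P beta Rw S j * x1 P beta sigma i j.
  rewrite fvalE; apply: (@reward_decomposition _ _ _ _ stochP beta01 S _ i _ (fS P beta Rw S) hs) => j jS.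
    by rewrite fSE reward_out.
  rewrite !fSE reward_in //; congr (_ + _ * _).
  by apply: eq_bigr => k _; rewrite fSE.
by split => //; apply: decomposition_combination.
Qed.
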